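(* Let $G$ and $H$ be connected graphs, each with at least $2$ vertices. Then $$\gamma(G\times H)=\frac{1}{\frac{1}{\gamma(G)}+\frac{1}{\gamma(H)}}.$$
   Context: For a finite simple undirected graph $G$ with $n$ vertices, let $\mathcal{F}=\{x\in\mathbb{R}^{V(G)} : \sum_{v} x_v = 0,\ \|x\|_\infty = 1\}$, for $x\in\mathcal{F}$ let $\gamma_x(G)=\max_{uv\in E(G)}|x_u-x_v|$, and $\gamma(G)=\min_{x\in\mathcal{F}}\gamma_x(G)$. The Cartesian product $G\times H$ has vertex set $V(G)\times V(H)$, with $(u_1,v_1)\sim(u_2,v_2)$ iff either $u_1\sim u_2$ in $G$ and $v_1=v_2$, or $u_1=u_2$ and $v_1\sim v_2$ in $H$. *)

From HB Require Import structures.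
From mathcomp Require Import all_boot all_order all_algebra.
From mathcomp Require Import boolp classical_sets reals.
Set Implicit Arguments. Unset Strict Implicit. Unset Printing Implicit Defensive.
Import Order.TTheory GRing.Theory Num.Theory.
Local Open Scope ring_scope.
Local Open Scope classical_set_scope.

Definition simple_graph (T : finType) (e : rel T) : Prop :=
  symmetric e /\ irreflexive e.

Definition connected_graph (T : finType) (e : rel T) : Prop :=
  forall u v : T, connect e u v.

Definition cart_prod (T U : finType) (e : rel T) (f : rel U) : rel (T * U) :=
  fun p q => (e p.1 q.1 && (p.2 == q.2)) || ((p.1 == q.1) && f p.2 q.2).

Section Gamma.
Variable R : realType.

Definition supnorm (T : finType) (x : T -> R) : R :=
  \big[Num.max/0]_(v : T) `|x v|.

Definition feasible (T : finType) : set (T -> R) :=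
  [set x | \sum_(v : T) x v = 0 /\ supnorm x = 1].

Definition gamma_x (T : finType) (e : rel T) (x : T -> R) : R :=
  \big[Num.max/0]_(p : T * T | e p.1 p.2) `|x p.1 - x p.2|.

(* gamma(G) = min over F of gamma_x(G) (the minimum is attained, so it
   coincides with the infimum used here) *)
Definition gamma (T : finType) (e : rel T) : R :=
  inf [set gamma_x e x | x in @feasible T].
End Gamma.

From HB Require Import structures.
From mathcomp Require Import all_boot all_order all_algebra.
From mathcomp Require Import boolp classical_sets reals.
From mathcomp Require Import zify ring lra.
Set Implicit Arguments. Unset Strict Implicit.
Import Order.TTheory GRing.Theory Num.Theory.
Local Open Scope ring_scope.

(* Let d be the graph distance of a connected graph G on n vertices and
   D = max_v sum_u d(u, v) its maximal transmission; then gamma(G) = n / D.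
   For feasible x pick v with |x_v| = 1: since sum_u x_u = 0,
   n = sum_u x_v (x_v - x_u) <= gamma_x(G) sum_u d(u, v) <= gamma_x(G) D.
   Conversely, for v0 of maximal transmission, x_u = 1 - (n / D) d(u, v0) is
   feasible with gamma_x(G) <= n / D; it stays in [-1, 1] because
   n d(u, v0) <= sum_w (d(w, u) + d(w, v0)) <= 2 D.
   Distances in G x H add up, so the maximal transmission of G x H is
   |H| D_G + |G| D_H, and the formula follows by arithmetic. *)

(* For a symmetric connected [e] these conditions force [d u v] to be the
   length of a shortest path from [u] to the target [v]. *)
Definition is_distance (T : finType) (e : rel T) (d : T -> T -> nat) :=
  [/\ forall u, d u u = 0%N,
      forall u w v, e u w -> (d w v <= (d u v).+1)%N &
      forall u v, u != v -> exists2 w, e u w & (d w v < d u v)%N].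

Definition transmission (T : finType) (d : T -> T -> nat) (v : T) : nat :=
  (\sum_u d u v)%N.

Lemma exists_max_transmission (T : finType) (d : T -> T -> nat) :
  (0 < #|T|)%N -> exists v0, forall v, (transmission d v <= transmission d v0)%N.
Proof.
case/card_gt0P=> t _; have [v0 _ v0_max] := arg_maxnP (transmission d) (isT : xpredT t).
by exists v0 => v; apply: v0_max.
Qed.

Section Distance.
Variables (T : finType) (e : rel T) (d : T -> T -> nat).
Hypotheses (e_sym : symmetric e) (dist_d : is_distance e d).

Lemma dist_ind (P : T -> Prop) v :
  P v -> (forall u w, e u w -> (d w v < d u v)%N -> P w -> P u) -> forall u, P u.
Proof.
have [_ _ d_descent] := dist_d; move=> Pv step u.
move: {2}(d u v).+1 (ltnSn (d u v)) => k.
elim: k u => [|k IH] u // lt_uk.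
have [->//|neq_uv] := eqVneq u v.
have [w euw lt_wu] := d_descent _ _ neq_uv.
by apply: step euw lt_wu (IH _ (leq_trans lt_wu lt_uk)).
Qed.

Lemma dist_gt0 u v : u != v -> (0 < d u v)%N.
Proof.
have [_ _ d_descent] := dist_d.
by case/d_descent=> w _; apply: leq_ltn_trans.
Qed.

Lemma dist_triangle u w v : (d u v <= d u w + d w v)%N.
Proof.
have [d0 d_edge _] := dist_d.
move: u; apply: (dist_ind (v := w)) => [|u u' euu' lt_u'u IH]; first by rewrite d0.
have := d_edge u' u v; rewrite e_sym => /(_ euu'); lia.
Qed.

Lemma dist_sym u v : d u v = d v u.
Proof.
have [d0 d_edge _] := dist_d.
suff le_dist x y : (d y x <= d x y)%N by apply/eqP; rewrite eqn_leq !le_dist.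
move: x; apply: (dist_ind (v := y)) => [|x w exw lt_wx IH]; first by rewrite d0.
have := dist_triangle y w x; have := d_edge x w x exw; rewrite d0; lia.
Qed.

Lemma dist_lipschitz (R : realType) (x : T -> R) g u v :
  0 <= g -> (forall u w, e u w -> `|x u - x w| <= g) ->
  `|x u - x v| <= g * (d u v)%:R.
Proof.
move=> g_ge0 x_edge.
move: u; apply: (dist_ind (v := v)) => [|u w euw lt_wu IH].
  by rewrite subrr normr0 mulr_ge0.
have := ler_distD (x w) (x u) (x v); have := x_edge _ _ euw.
have : (d w v)%:R + 1 <= (d u v)%:R :> R by rewrite natr1 ler_nat.
nra.
Qed.

Lemma transmission_gt0 v : (1 < #|T|)%N -> (0 < transmission d v)%N.
Proof.
case/card_gt1P=> a [b [_ _ neq_ab]].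
have [u neq_uv] : exists u, u != v.
  by case: (eqVneq a v) => [eq_av|]; [exists b; rewrite -eq_av eq_sym | exists a].
by rewrite /transmission (bigD1 u) //= ltn_addr ?dist_gt0.
Qed.

Lemma card_mul_dist_le v0 :
  (forall v, transmission d v <= transmission d v0)%N ->
  forall u, (#|T| * d u v0 <= 2 * transmission d v0)%N.
Proof.
move=> v0_max u; rewrite -sum_nat_const.
apply: (@leq_trans (transmission d u + transmission d v0)); last first.
  by have := v0_max u; lia.
rewrite /transmission -big_split /=; apply: leq_sum => w _.
by rewrite (dist_sym w u); apply: dist_triangle.
Qed.

End Distance.

Section DistanceExists.
Variables (T : finType) (e : rel T).
Hypotheses (e_sym : symmetric e) (e_conn : connected_graph e).

Definition ball (v : T) (k : nat) : {set T} :=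
  iter k (fun S => S :|: [set u | [exists w in S, e u w]]) [set v].

Lemma in_ballS v k u :
  (u \in ball v k.+1) = (u \in ball v k) || [exists w in ball v k, e u w].
Proof. by rewrite /ball iterS finset.in_setU inE. Qed.

Lemma ball_connected u v : exists k, u \in ball v k.
Proof.
have /connectP [p p_path ->] := e_conn u v.
elim: p u p_path => [|w p IH] u /=; first by exists 0%N; rewrite /ball /= set11.
case/andP=> euw /IH [k w_in]; exists k.+1.
by rewrite in_ballS; apply/orP; right; apply/existsP; exists w; rewrite w_in.
Qed.

Lemma is_distance_exists : exists d, is_distance e d.
Proof.
pose d u v := ex_minn (ball_connected u v).
have d_in u v : u \in ball v (d u v) by rewrite /d; case: ex_minnP.
have d_min u v k : u \in ball v k -> (d u v <= k)%N.
  by rewrite /d; case: ex_minnP => m _ min_m /min_m.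
exists d; split.
- by move=> u; apply/eqP; rewrite -leqn0; apply: d_min; rewrite /ball /= set11.
- move=> u w v euw; apply: d_min; rewrite in_ballS; apply/orP; right.
  by apply/existsP; exists u; rewrite d_in e_sym.
- move=> u v neq_uv; have := d_in u v; case E: (d u v) => [|k].
    by rewrite /ball /= finset.in_set1 (negbTE neq_uv).
  rewrite in_ballS => /orP [/d_min|/existsP [w /andP [/d_min w_in euw]]].
    by rewrite E ltnn.
  by exists w; rewrite // E ltnS.
Qed.

End DistanceExists.

Section Gamma.
Variables (R : realType) (T : finType) (e : rel T).

Lemma gamma_x_ge0 (x : T -> R) : 0 <= gamma_x e x.
Proof. exact: bigmax_ge_id. Qed.

Lemma edge_le_gamma_x (x : T -> R) u w : e u w -> `|x u - x w| <= gamma_x e x.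
Proof.
move=> euw; exact: (le_bigmax_cond (j := (u, w)) (P := fun p => e p.1 p.2) 0
  (fun p => `|x p.1 - x p.2|) euw).
Qed.

Lemma gamma_x_le (x : T -> R) c :
  0 <= c -> (forall u w, e u w -> `|x u - x w| <= c) -> gamma_x e x <= c.
Proof. by move=> c_ge0 x_edge; apply: bigmax_le => // p /x_edge. Qed.

Lemma supnorm_eq1P (x : T -> R) :
  supnorm x = 1 <-> (exists v, `|x v| = 1) /\ (forall u, `|x u| <= 1).
Proof.
split=> [sup1|[[v xv1] x_le1]]; last first.
  by apply/le_anti; rewrite bigmax_le //= -xv1 le_bigmax.
split=> [|u]; last by rewrite -sup1; apply: le_bigmax.
case: (pickP T) => [v _|T0]; last first.
  by move: sup1; rewrite /supnorm big_pred0 // => /eqP; rewrite eq_sym oner_eq0.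
have [u _ sup_u] := eq_bigmax (x := 0) v xpredT (fun u => `|x u|) isT
  (fun u _ => normr_ge0 (x u)).
by exists u; rewrite -sup_u.
Qed.

Lemma gamma_eq_attained_lb c (x0 : T -> R) :
  feasible x0 -> gamma_x e x0 <= c ->
  (forall x, feasible x -> c <= gamma_x e x) -> gamma R e = c.
Proof.
move=> x0_feas x0_le lb.
have lbound_c : lbound [set gamma_x e x | x in @feasible R T] c.
  by move=> _ [x x_feas <-]; apply: lb.
apply/le_anti/andP; split.
  by apply: le_trans x0_le; apply: ge_inf; [exists c | exists x0].
by apply: lb_le_inf => //; exists (gamma_x e x0), x0.
Qed.

End Gamma.

Section GammaTransmission.
Variables (R : realType) (T : finType) (e : rel T) (d : T -> T -> nat) (v0 : T).
Hypotheses (e_sym : symmetric e) (dist_d : is_distance e d) (card_gt1 : (1 < #|T|)%N).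
Hypothesis v0_max : forall v, (transmission d v <= transmission d v0)%N.

Let D_gt0 : (0 : R) < (transmission d v0)%:R.
Proof. by rewrite ltr0n (transmission_gt0 dist_d). Qed.

Lemma gamma_x_ge_ratio (x : T -> R) :
  feasible x -> #|T|%:R / (transmission d v0)%:R <= gamma_x e x.
Proof.
move=> [sum0 /supnorm_eq1P [[v xv1] _]].
rewrite ler_pdivrMr ?D_gt0 //.
have card_eq : #|T|%:R = \sum_u x v * (x v - x u).
  rewrite -big_distrr /= sumrB sum0 subr0 sumr_const mulrnAr -expr2.
  by rewrite -real_normK ?num_real // xv1 expr1n.
apply: (@le_trans _ _ (\sum_u gamma_x e x * (d u v)%:R)).
  rewrite card_eq; apply: ler_sum => u _.
  apply: le_trans (ler_norm _) _; rewrite normrM xv1 mul1r distrC.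
  apply: (dist_lipschitz dist_d); [exact: gamma_x_ge0 | exact: edge_le_gamma_x].
rewrite -big_distrr /= -natr_sum ler_wpM2l ?gamma_x_ge0 // ler_nat.
exact: v0_max.
Qed.

Definition extremal_vector : T -> R :=
  fun u => 1 - #|T|%:R / (transmission d v0)%:R * (d u v0)%:R.

Lemma extremal_vector_feasible : feasible extremal_vector.
Proof.
have [d0 _ _] := dist_d.
split.
  rewrite sumrB sumr_const -big_distrr /= -natr_sum divfK ?subrr //.
  by rewrite gt_eqF.
apply/supnorm_eq1P; split.
  by exists v0; rewrite /extremal_vector d0 mulr0 subr0 normr1.
move=> u; rewrite /extremal_vector ler_norml; apply/andP; split; last first.
  by rewrite lerBlDr lerDl mulr_ge0 ?divr_ge0.
have : #|T|%:R / (transmission d v0)%:R * (d u v0)%:R <= 2 :> R.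
  rewrite mulrAC ler_pdivrMr // -natrM -(natrM _ 2) ler_nat.
  exact: card_mul_dist_le.
lra.
Qed.

Lemma gamma_x_extremal_vector :
  gamma_x e extremal_vector <= #|T|%:R / (transmission d v0)%:R.
Proof.
have [_ d_edge _] := dist_d.
apply: gamma_x_le => [|u w euw]; first by rewrite divr_ge0.
have le_wu : (d w v0)%:R <= (d u v0)%:R + 1 :> R by rewrite natr1 ler_nat d_edge.
have le_uw : (d u v0)%:R <= (d w v0)%:R + 1 :> R.
  by rewrite natr1 ler_nat d_edge // e_sym.
rewrite /extremal_vector ler_norml; set c := #|T|%:R / _.
have c_ge0 : 0 <= c by rewrite divr_ge0.
by apply/andP; split; nra.
Qed.

Lemma gamma_transmission : gamma R e = #|T|%:R / (transmission d v0)%:R.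
Proof.
apply: (gamma_eq_attained_lb extremal_vector_feasible gamma_x_extremal_vector).
exact: gamma_x_ge_ratio.
Qed.

End GammaTransmission.

Section CartesianProduct.
Variables (T U : finType) (e : rel T) (f : rel U).
Variables (dT : T -> T -> nat) (dU : U -> U -> nat).

Definition cart_dist (p q : T * U) : nat := (dT p.1 q.1 + dU p.2 q.2)%N.

Lemma cart_prod_sym : symmetric e -> symmetric f -> symmetric (cart_prod e f).
Proof.
by move=> e_sym f_sym p q; rewrite /cart_prod e_sym f_sym (eq_sym p.1) (eq_sym p.2).
Qed.

Lemma is_distance_cart_prod :
  is_distance e dT -> is_distance f dU -> is_distance (cart_prod e f) cart_dist.
Proof.
move=> [dT0 dT_edge dT_descent] [dU0 dU_edge dU_descent]; split.
- by move=> u; rewrite /cart_dist dT0 dU0.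
- move=> [u1 u2] [w1 w2] [v1 v2]; rewrite /cart_prod /cart_dist /=.
  case/orP=> [/andP [e_uw /eqP <-]|/andP [/eqP <- f_uw]].
    by have := dT_edge _ _ v1 e_uw; lia.
  by have := dU_edge _ _ v2 f_uw; lia.
- move=> [u1 u2] [v1 v2]; rewrite /cart_prod /cart_dist /=.
  have [<-|neq1] := eqVneq u1 v1 => neq.
    have neq2 : u2 != v2 by apply: contra neq => /eqP ->.
    have [w f_uw lt_w] := dU_descent u2 v2 neq2.
    by exists (u1, w); rewrite /= ?eqxx ?f_uw ?orbT // ltn_add2l.
  have [w e_uw lt_w] := dT_descent u1 v1 neq1.
  by exists (w, u2); rewrite /= ?eqxx ?e_uw // ltn_add2r.
Qed.

Lemma transmission_cart_dist v w :
  transmission cart_dist (v, w) =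
    (#|U| * transmission dT v + #|T| * transmission dU w)%N.
Proof.
rewrite /transmission /cart_dist -(pair_bigA _ (fun a b => dT a v + dU b w))%N /=.
under eq_bigr => a _ do rewrite big_split /= sum_nat_const.
by rewrite big_split /= -big_distrr /= sum_nat_const mulnC.
Qed.

End CartesianProduct.

Theorem theorem5p1 (R : realType) (T U : finType) (e : rel T) (f : rel U) :
  simple_graph e -> simple_graph f ->
  connected_graph e -> connected_graph f ->
  (1 < #|T|)%N -> (1 < #|U|)%N ->
  gamma R (cart_prod e f) = 1 / (1 / gamma R e + 1 / gamma R f).
Proof.
move=> [e_sym _] [f_sym _] e_conn f_conn T_gt1 U_gt1.
have [dT dist_dT] := is_distance_exists e_sym e_conn.
have [dU dist_dU] := is_distance_exists f_sym f_conn.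
have [v0 v0_max] := exists_max_transmission dT (ltnW T_gt1).
have [w0 w0_max] := exists_max_transmission dU (ltnW U_gt1).
have TU_gt1 : (1 < #|{: T * U}|)%N by rewrite card_prod; nia.
have vw0_max p :
    (transmission (cart_dist dT dU) p <= transmission (cart_dist dT dU) (v0, w0))%N.
  case: p => v w; rewrite !transmission_cart_dist.
  by apply: leq_add; rewrite leq_mul2l ?v0_max ?w0_max orbT.
rewrite (gamma_transmission R (cart_prod_sym e_sym f_sym)
  (is_distance_cart_prod dist_dT dist_dU) TU_gt1 vw0_max).
rewrite (gamma_transmission R e_sym dist_dT T_gt1 v0_max).
rewrite (gamma_transmission R f_sym dist_dU U_gt1 w0_max).
rewrite transmission_cart_dist card_prod natrD !natrM.
have DT_gt0 : (0 : R) < (transmission dT v0)%:R.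
  by rewrite ltr0n (transmission_gt0 dist_dT).
have DU_gt0 : (0 : R) < (transmission dU w0)%:R.
  by rewrite ltr0n (transmission_gt0 dist_dU).
have nT_gt0 : (0 : R) < #|T|%:R by rewrite ltr0n; lia.
have nU_gt0 : (0 : R) < #|U|%:R by rewrite ltr0n; lia.
by field; rewrite !gt_eqF ?addr_gt0 ?mulr_gt0.
Qed.
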